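(* Let $\widehat p\in(0,\infty)^C$ be a probability vector ($\sum_c\widehat p_c=1$), $\varepsilon\ge0$ and $\rho\in\mathbb R_+^C$ with $\sum_{c=1}^C\widehat p_c\rho_c\le\varepsilon$. The set \[\mathcal Q=\Big\{q\in\mathbb R_+^C:\sum_{c=1}^Cq_c=1,\ \sum_{c=1}^Cq_c(\log q_c-\log\widehat p_c+\rho_c)\le\varepsilon\Big\}\] is compact and convex, and its support function satisfies, for every $t\in\mathbb R^C$, \[h_{\mathcal Q}(t):=\sup_{q\in\mathcal Q}q^\top t=\inf_{\alpha\in\mathbb R,\ \beta>0}\Big\{\alpha+\beta\varepsilon+\beta\sum_{c=1}^C\widehat p_c\exp\Big(\frac{t_c-\alpha}{\beta}-\rho_c-1\Big)\Big\}.\]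
   Context: The convention $0\log0=0$ is used. *)

(* Vectors q in R^C are row vectors 'rV[R]_C
   (coordinates q 0 c), with the canonical matrix topology (= Euclidean). *)
From HB Require Import structures.
From mathcomp Require Import all_boot all_order all_algebra.
From mathcomp Require Import all_classical all_reals all_analysis.
Set Implicit Arguments. Unset Strict Implicit. Unset Printing Implicit Defensive.
Import Order.TTheory GRing.Theory Num.Theory.
Import numFieldNormedType.Exports.
Local Open Scope classical_set_scope.
Local Open Scope ring_scope.

(* The ambiguity set Q (KL-type ball with shift rho), with ln 0 = 0 so that
   the convention 0 log 0 = 0 holds. *)
Definition Qset (R : realType) (C : nat) (phat rho : 'I_C -> R) (eps : R)
  : set 'rV[R]_C :=
  [set q | (forall c, 0 <= q 0 c) /\ \sum_(c < C) q 0 c = 1 /\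
           \sum_(c < C) q 0 c * (ln (q 0 c) - ln (phat c) + rho c) <= eps].

Definition convex_vset (R : realType) (C : nat) (S : set 'rV[R]_C) : Prop :=
  forall q1 q2, S q1 -> S q2 -> forall l : R, 0 <= l <= 1 ->
    S (l *: q1 + (1 - l) *: q2).

Definition support_fun (R : realType) (C : nat) (S : set 'rV[R]_C)
  (t : 'I_C -> R) : \bar R :=
  ereal_sup [set (\sum_(c < C) q 0 c * t c)%:E | q in S].

From HB Require Import structures.
From mathcomp Require Import all_boot all_order all_algebra.
From mathcomp Require Import all_classical all_reals all_analysis.
From mathcomp Require Import ring lra.
Import Order.TTheory GRing.Theory Num.Theory.
Import numFieldNormedType.Exports.
Local Open Scope classical_set_scope.
Local Open Scope ring_scope.

(* Q is closed as a sublevel set, inside the simplex, of the divergence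
   q |-> sum_c q_c (ln q_c - ln p_c + rho_c), which is continuous because
   x ln x -> 0 at 0, and convex by convexity of x ln x.  Weak duality is the
   termwise Fenchel-Young inequality x y <= x ln (x / p) + p exp (y - 1).
   Conversely, for beta > 0 the Gibbs vector
   q_beta = p exp (t / beta - rho) / Z_beta with alpha = beta (ln Z_beta - 1)
   leaves the duality gap beta (eps - F beta), where F beta is the divergence
   of q_beta.  F is continuous, so either F <= eps at a small beta, or F = eps
   somewhere by the intermediate value theorem, or F > eps at a large beta.
   In the last case q_beta is mixed with its limit q_oo ~ p exp (- rho),
   which is feasible since its divergence - ln (sum_c p_c exp (- rho_c)) is at
   most sum_c p_c rho_c <= eps; the gap is then bounded by the scaled cumulant
   beta ln E_(q_oo) exp (t / beta) - E_(q_oo) t = O(1 / beta). *)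

Section elementary_real.
Context {R : realType}.
Implicit Types a b l p x y : R.

Lemma ln_le_subr1 x : 0 < x -> ln x <= x - 1.
Proof. by move=> x0; have := @le_ln1Dx R (x - 1); rewrite addrCA subrr addr0; apply; lra. Qed.

Lemma subr_le_mul_lnB a b : 0 <= a -> 0 < b -> a - b <= a * (ln a - ln b).
Proof.
move=> a0 b0; have [->|an0] := eqVneq a 0; first by rewrite mul0r; lra.
have {a0 an0}a0 : 0 < a by rewrite lt_def an0.
have := ln_le_subr1 _ (divr_gt0 b0 a0); rewrite ln_div ?posrE // => lnba.
have : a * (ln b - ln a) <= a * (b / a - 1) by rewrite ler_pM2l.
have : a * (b / a - 1) = b - a by rewrite mulrBr mulrCA divff ?gt_eqF // !mulr1.
lra.
Qed.

Lemma fenchel_young_xlnx x y p : 0 <= x -> 0 < p ->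
  x * y <= x * (ln x - ln p) + p * expR (y - 1).
Proof.
move=> x0 p0; have [->|xn0] := eqVneq x 0.
  by rewrite !mul0r add0r mulr_ge0 ?expR_ge0 ?ltW.
have {x0 xn0}x0 : 0 < x by rewrite lt_def xn0.
set z := y - 1 - (ln x - ln p).
have xez : x * expR z = p * expR (y - 1).
  rewrite /z expRB expRB !lnK ?posrE //; field; rewrite ?gt_eqF ?expR_gt0 //.
have : x * (1 + z) <= x * expR z by rewrite ler_pM2l ?expR_ge1Dx.
rewrite xez /z; lra.
Qed.

Lemma convex_xlnx x y l : 0 <= x -> 0 <= y -> 0 <= l <= 1 ->
  (l * x + (1 - l) * y) * ln (l * x + (1 - l) * y) <=
  l * (x * ln x) + (1 - l) * (y * ln y).
Proof.
move=> x0 y0 /andP[l0 l1]; set z := l * x + (1 - l) * y.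
have z0 : 0 <= z by rewrite /z; nra.
have [z_eq0|zn0] := eqVneq z 0.
  have lx : l * x = 0 by move: z_eq0; rewrite /z; nra.
  have ly : (1 - l) * y = 0 by move: z_eq0; rewrite /z; nra.
  by rewrite z_eq0 mul0r !mulrA lx ly !mul0r addr0.
have {z0 zn0}z0 : 0 < z by rewrite lt_def zn0.
(* tangent line of [x ln x] at [z] *)
have hx : l * (x - z) <= l * (x * (ln x - ln z)).
  by apply: ler_wpM2l => //; exact: subr_le_mul_lnB.
have hy : (1 - l) * (y - z) <= (1 - l) * (y * (ln y - ln z)).
  by apply: ler_wpM2l; [rewrite subr_ge0 | exact: subr_le_mul_lnB].
by move: hx hy; rewrite /z; nra.
Qed.

Lemma expR_sub1D_le_sqr x : `|x| <= 1 / 2 -> expR x - 1 - x <= 2 * x ^+ 2.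
Proof.
rewrite ler_norml => /andP[xlo xhi]; have ex0 := expR_gt0 x.
have : (1 - x) * expR x <= 1.
  have : 1 - x <= (expR x)^-1 by rewrite -expRN; have := expR_ge1Dx (- x); lra.
  by move/(ler_wpM2r (ltW ex0)); rewrite mulVf ?gt_eqF.
rewrite expr2; nra.
Qed.

Lemma oppr_xlnx_le_sqrt x : 0 < x -> - (x * ln x) <= 2 * Num.sqrt x.
Proof.
move=> x0; set s := Num.sqrt x; have s0 : 0 < s by rewrite sqrtr_gt0.
have -> : x = s ^+ 2 by rewrite sqr_sqrtr ?ltW.
have lns : - ln s <= s^-1 - 1 by rewrite -lnV ?posrE // ln_le_subr1 ?invr_gt0.
have ss : s ^+ 2 * s^-1 = s by rewrite expr2 -mulrA divff ?mulr1 ?gt_eqF.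
rewrite lnXn // mulr2n.
have : s ^+ 2 * - ln s <= s ^+ 2 * (s^-1 - 1) by rewrite ler_pM2l ?exprn_gt0.
rewrite mulrBr mulr1 ss; have := sqr_ge0 s; nra.
Qed.

Lemma continuous_xlnx x : {for x, continuous (fun y : R => y * ln y)}.
Proof.
have [x_lt0|x_gt0|->] := ltgtP x 0.
- apply: (near_cst_continuous 0); near=> y.
  by rewrite ln0 ?mulr0 // ltW //; near: y; exact: lt_nbhsl.
- by apply: continuousM; [exact: cvg_id | exact: continuous_ln].
apply/cvgrPdist_lt => e e0; rewrite ln0 // mul0r.
have d0 : 0 < Num.min 1 ((e / 2) ^+ 2) by rewrite lt_min ltr01 exprn_gt0 ?divr_gt0.
apply/nbhs_ballP; exists (Num.min 1 ((e / 2) ^+ 2)) => // y.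
rewrite /ball /= !sub0r !normrN lt_min => /andP[y1 ye].
have [y_le0|y0] := leP y 0; first by rewrite ln0 // mulr0 normr0.
have y_le1 : y <= 1 by rewrite ltW // (le_lt_trans (ler_norm y)).
rewrite ler0_norm; last by rewrite mulr_ge0_le0 ?ln_le0 // ltW.
apply: (le_lt_trans (oppr_xlnx_le_sqrt _ y0)).
have : Num.sqrt y < e / 2.
  rewrite -(@ger0_norm _ (e / 2)) ?divr_ge0 ?ltW // -sqrtr_sqr ltr_sqrt ?exprn_gt0 ?divr_gt0 //.
  by rewrite (le_lt_trans (ler_norm y)).
lra.
Unshelve. all: by end_near.
Qed.

Lemma continuous_xlnxD a : continuous (fun z : R => z * (ln z + a)).
Proof.
have -> : (fun z : R => z * (ln z + a)) = (fun z => z * ln z + z * a).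
  by apply: funext => z; rewrite mulrDr.
move=> x; apply: (@continuousD R R^o R (fun z => z * ln z) (fun z => z * a) x).
  exact: continuous_xlnx.
by apply: continuousM; [exact: cvg_id | exact: cvg_cst].
Qed.

End elementary_real.

Lemma continuous_sum_for {R : numFieldType} {T : topologicalType} {n : nat}
    (f : 'I_n -> T -> R) (x : T) :
  (forall c, {for x, continuous (f c)}) ->
  {for x, continuous (fun y => \sum_(c < n) f c y)}.
Proof. by move=> fx; apply: cvg_big => // [|c _]; [exact: add_continuous | exact: fx]. Qed.

Lemma ler_sum_elem {R : numDomainType} {I : finType} (F : I -> R) (i : I) :
  (forall j, 0 <= F j) -> F i <= \sum_j F j.
Proof. by move=> F0; rewrite (bigD1 i) //= lerDl sumr_ge0. Qed.

Definition shifted_kl {R : realType} {n : nat} (p rho q : 'I_n -> R) : R :=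
  \sum_(c < n) q c * (ln (q c) - ln (p c) + rho c).

Definition gibbs_norm {R : realType} {n : nat} (p s : 'I_n -> R) : R :=
  \sum_(c < n) p c * expR (s c).

Definition gibbs {R : realType} {n : nat} (p s : 'I_n -> R) (c : 'I_n) : R :=
  p c * expR (s c) / gibbs_norm p s.

Section relative_entropy.
Context {R : realType} {n : nat}.
Implicit Types (p q r rho : 'I_n -> R).

Lemma kl_ge0 q r : (forall c, 0 <= q c) -> (forall c, 0 < r c) ->
  \sum_(c < n) q c = \sum_(c < n) r c -> 0 <= \sum_(c < n) q c * (ln (q c) - ln (r c)).
Proof.
move=> q0 r0 qr; apply: (@le_trans _ _ (\sum_(c < n) (q c - r c))).
  by rewrite sumrB qr subrr.
by apply: ler_sum => c _; exact: subr_le_mul_lnB.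
Qed.

Lemma shifted_kl_ge0 p rho q : (forall c, 0 < p c) -> \sum_(c < n) p c = 1 ->
  (forall c, 0 <= rho c) -> (forall c, 0 <= q c) -> \sum_(c < n) q c = 1 ->
  0 <= shifted_kl p rho q.
Proof.
move=> p0 p1 rho0 q0 q1.
have -> : shifted_kl p rho q =
    \sum_(c < n) q c * (ln (q c) - ln (p c)) + \sum_(c < n) q c * rho c.
  by rewrite -big_split; apply: eq_bigr => c _ /=; ring.
by rewrite addr_ge0 ?kl_ge0 ?p1 // sumr_ge0 // => c _; rewrite mulr_ge0.
Qed.

Lemma convex_shifted_kl p rho q1 q2 l :
  (forall c, 0 <= q1 c) -> (forall c, 0 <= q2 c) -> 0 <= l <= 1 ->
  shifted_kl p rho (fun c => l * q1 c + (1 - l) * q2 c) <=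
  l * shifted_kl p rho q1 + (1 - l) * shifted_kl p rho q2.
Proof.
move=> q10 q20 l01; rewrite /shifted_kl !mulr_sumr -big_split /=.
apply: ler_sum => c _; have := convex_xlnx _ _ _ (q10 c) (q20 c) l01.
set m := l * q1 c + (1 - l) * q2 c; set k := rho c - ln (p c).
have split_term z : z * (ln z - ln (p c) + rho c) = z * ln z + z * k by rewrite /k; ring.
rewrite !split_term /m; lra.
Qed.

End relative_entropy.

Section gibbs.
Context {R : realType} {n : nat} {p : 'I_n -> R}.
Hypotheses (p_gt0 : forall c, 0 < p c) (p_sum1 : \sum_(c < n) p c = 1).
Implicit Types (rho s u : 'I_n -> R).

Lemma gibbs_norm_gt0 s : 0 < gibbs_norm p s.
Proof.
have pe0 c : true -> 0 <= p c * expR (s c) by rewrite mulr_ge0 ?expR_ge0 ?ltW.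
rewrite lt_def sumr_ge0 // andbT; apply/eqP => /(psumr_eq0P pe0) pe_eq0.
have : \sum_(c < n) p c = 0.
  apply: big1 => c _; have /eqP := pe_eq0 c isT.
  by rewrite mulf_eq0 expR_eq0 orbF => /eqP.
by rewrite p_sum1; apply/eqP; rewrite oner_eq0.
Qed.

Lemma gibbs_gt0 s c : 0 < gibbs p s c.
Proof. by rewrite divr_gt0 ?gibbs_norm_gt0 ?mulr_gt0 ?expR_gt0. Qed.

Lemma gibbs_sum1 s : \sum_(c < n) gibbs p s c = 1.
Proof. by rewrite -mulr_suml divff // gt_eqF ?gibbs_norm_gt0. Qed.

Lemma ln_gibbs s c : ln (gibbs p s c) = ln (p c) + s c - ln (gibbs_norm p s).
Proof.
by rewrite ln_div ?lnM ?expRK ?posrE ?mulr_gt0 ?expR_gt0 ?gibbs_norm_gt0.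
Qed.

Lemma shifted_kl_gibbs rho s :
  shifted_kl p rho (gibbs p s) =
  \sum_(c < n) gibbs p s c * (s c + rho c) - ln (gibbs_norm p s).
Proof.
rewrite -[ln _]mul1r -(gibbs_sum1 s) mulr_suml -sumrB.
by apply: eq_bigr => c _; rewrite ln_gibbs; ring.
Qed.

Lemma gibbs_normD s u :
  gibbs_norm p (fun c => s c + u c) =
  gibbs_norm p s * \sum_(c < n) gibbs p s c * expR (u c).
Proof.
rewrite mulr_sumr; apply: eq_bigr => c _; rewrite /gibbs expRD.
by field; rewrite gt_eqF ?gibbs_norm_gt0.
Qed.

Lemma shifted_kl_gibbsN rho :
  shifted_kl p rho (gibbs p (fun c => - rho c)) = - ln (gibbs_norm p (fun c => - rho c)).
Proof.
by rewrite shifted_kl_gibbs big1 ?sub0r // => c _; rewrite addNr mulr0.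
Qed.

Lemma oppr_ln_gibbs_normN_le rho :
  - ln (gibbs_norm p (fun c => - rho c)) <= \sum_(c < n) p c * rho c.
Proof.
set g := gibbs p (fun c => - rho c).
have := @kl_ge0 _ _ p g (fun c => ltW (p_gt0 c)) (gibbs_gt0 _).
rewrite gibbs_sum1 p_sum1 => /(_ erefl).
have -> : \sum_(c < n) p c * (ln (p c) - ln (g c)) =
          \sum_(c < n) p c * rho c + ln (gibbs_norm p (fun c => - rho c)).
  rewrite -[ln (gibbs_norm _ _)]mul1r -p_sum1 mulr_suml -big_split /=.
  by apply: eq_bigr => c _; rewrite /g ln_gibbs; ring.
lra.
Qed.

End gibbs.

Definition feasible {R : realType} {n : nat} (p rho : 'I_n -> R) (eps : R)
    (q : 'I_n -> R) : Prop :=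
  [/\ forall c, 0 <= q c, \sum_(c < n) q c = 1 & shifted_kl p rho q <= eps].

Section ambiguity_set.
Context {R : realType} {n : nat} (p rho : 'I_n -> R) (eps : R).

Lemma QsetP (q : 'rV[R]_n) : Qset p rho eps q <-> feasible p rho eps (q 0).
Proof. by split=> [[q0 [q1 qkl]]|[q0 q1 qkl]]. Qed.

Lemma Qset_row (q : 'I_n -> R) : feasible p rho eps q -> Qset p rho eps (\row_c q c).
Proof.
move=> qf; apply/QsetP; suff -> : (\row_c q c) 0 = q by [].
by apply: funext => c; rewrite mxE.
Qed.

Lemma closed_Qset : closed (Qset p rho eps).
Proof.
have coord c : continuous (fun q : 'rV[R]_n => q 0 c) by move=> q; exact: coord_continuous.
have -> : Qset p rho eps =
    \bigcap_(c in setT) ((fun q : 'rV[R]_n => q 0 c) @^-1` [set x | 0 <= x]) `&`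
    ((fun q : 'rV[R]_n => \sum_(c < n) q 0 c) @^-1` [set x | x = 1] `&`
     (fun q : 'rV[R]_n => shifted_kl p rho (q 0)) @^-1` [set x | x <= eps]).
  apply/seteqP; split=> q /=.
  - by move=> [q0 [q1 qkl]]; split=> // c _; apply: q0.
  - by move=> [q0 [q1 qkl]]; split=> // c; apply: q0.
apply: closedI.
  by apply: closed_bigI => c _; apply: closed_comp; [move=> q _; exact: coord | exact: closed_ge].
apply: closedI; apply: closed_comp; [ | exact: closed_eq | | exact: closed_le].
- by move=> q _; apply: continuous_sum_for => c; exact: coord.
- move=> q _; rewrite /shifted_kl; under [fun q => _]funext => q' do under eq_bigr do rewrite -addrA.
  apply: continuous_sum_for => c.
  exact: (continuous_comp (coord c q) (continuous_xlnxD _ _)).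
Qed.

Lemma compact_Qset : compact (Qset p rho eps).
Proof.
apply: (@subclosed_compact _ _ [set q : 'rV[R]_n | forall c, `[(0:R), 1]%classic (q ord0 c)]).
- exact: closed_Qset.
- by apply: (@rV_compact _ n (fun _ => `[(0:R), 1]%classic)) => c; exact: segment_compact.
move=> q [q0 [q1 _]] c /=; rewrite in_itv /= q0 -q1.
exact: ler_sum_elem.
Qed.

Lemma convex_Qset : convex_vset (Qset p rho eps).
Proof.
move=> q1 q2 /QsetP[q10 q11 q1kl] /QsetP[q20 q21 q2kl] l l01.
have /andP[l0 l1] := l01.
have qlE : (l *: q1 + (1 - l) *: q2) 0 = fun c => l * q1 0 c + (1 - l) * q2 0 c.
  by apply: funext => c; rewrite !mxE.
apply/QsetP; rewrite qlE; split.
- by move=> c; rewrite addr_ge0 ?mulr_ge0 ?subr_ge0.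
- by rewrite big_split /= -!mulr_sumr q11 q21 !mulr1 subrKC.
apply: (le_trans (convex_shifted_kl _ _ _ _ _ q10 q20 l01)).
have : l * shifted_kl p rho (q1 0) <= l * eps by rewrite ler_wpM2l.
have : (1 - l) * shifted_kl p rho (q2 0) <= (1 - l) * eps by rewrite ler_wpM2l ?subr_ge0.
lra.
Qed.

End ambiguity_set.

Lemma scaled_cgf_le {R : realType} {n : nat} (q t : 'I_n -> R) (M b : R) :
  (forall c, 0 <= q c) -> \sum_(c < n) q c = 1 -> (forall c, `|t c| <= M) ->
  0 < b -> 2 * M <= b ->
  b * ln (\sum_(c < n) q c * expR (t c / b)) - \sum_(c < n) q c * t c <= 2 * M ^+ 2 / b.
Proof.
move=> q0 q1 tM b0 Mb.
have small c : `|t c / b| <= 1 / 2.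
  by rewrite normrM normfV (gtr0_norm b0) ler_pdivrMr //; have := tM c; lra.
have term c : b * expR (t c / b) - b - t c <= 2 * M ^+ 2 / b.
  have := ler_wpM2l (ltW b0) (expR_sub1D_le_sqr _ (small c)).
  have -> : b * (expR (t c / b) - 1 - t c / b) = b * expR (t c / b) - b - t c.
    by field; rewrite gt_eqF.
  have -> : b * (2 * (t c / b) ^+ 2) = 2 * `|t c| ^+ 2 / b.
    by rewrite real_normK ?num_real //; field; rewrite gt_eqF.
  move/le_trans; apply; rewrite ler_pM2r ?invr_gt0 // ler_pM2l //.
  by have := tM c; have := normr_ge0 (t c); nra.
set Y := \sum_(c < n) q c * expR (t c / b).
have Y_ge : 1 / 2 <= Y.
  have -> : 1 / 2 = \sum_(c < n) q c * (1 / 2) by rewrite -mulr_suml q1 !mul1r.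
  apply: ler_sum => c _; apply: ler_wpM2l => //.
  by have := expR_ge1Dx (t c / b); have := small c; rewrite ler_norml => /andP[lo hi] ex; lra.
have lnY : b * ln Y <= b * (Y - 1) by rewrite ler_pM2l // ln_le_subr1 //; lra.
have gapE : b * (Y - 1) - \sum_(c < n) q c * t c =
            \sum_(c < n) q c * (b * expR (t c / b) - b - t c).
  rewrite [RHS](eq_bigr (fun c => b * (q c * expR (t c / b)) - b * q c - q c * t c)).
    by rewrite !sumrB -!mulr_sumr q1 /Y; ring.
  by move=> c _; ring.
apply: (@le_trans _ _ (b * (Y - 1) - \sum_(c < n) q c * t c)); first lra.
have -> : 2 * M ^+ 2 / b = \sum_(c < n) q c * (2 * M ^+ 2 / b) by rewrite -mulr_suml q1 mul1r.
by rewrite gapE; apply: ler_sum => c _; rewrite ler_wpM2l.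
Qed.

Definition dual_obj {R : realType} {n : nat} (p rho t : 'I_n -> R) (eps alpha beta : R) : R :=
  alpha + beta * eps + beta * \sum_(c < n) p c * expR ((t c - alpha) / beta - rho c - 1).

Definition dual_gap_within {R : realType} {n : nat} (p rho t : 'I_n -> R) (eps d : R) : Prop :=
  exists alpha beta (q : 'I_n -> R), [/\ 0 < beta, feasible p rho eps q &
    dual_obj p rho t eps alpha beta <= \sum_(c < n) q c * t c + d].

Lemma weak_duality {R : realType} {n : nat} (p rho t q : 'I_n -> R) (eps alpha beta : R) :
  (forall c, 0 < p c) -> feasible p rho eps q -> 0 < beta ->
  \sum_(c < n) q c * t c <= dual_obj p rho t eps alpha beta.
Proof.
move=> p0 [q0 q1 qkl] beta0.
have term c : q c * t c <= q c * alpha + beta * (q c * (ln (q c) - ln (p c) + rho c)) +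
                           beta * (p c * expR ((t c - alpha) / beta - rho c - 1)).
  have := fenchel_young_xlnx _ ((t c - alpha) / beta - rho c) _ (q0 c) (p0 c).
  move/(ler_wpM2l (ltW beta0)).
  have -> : beta * (q c * ((t c - alpha) / beta - rho c)) =
            q c * t c - q c * alpha - beta * (q c * rho c) by field; rewrite gt_eqF.
  lra.
apply: (le_trans (ler_sum _ (fun c _ => term c))).
rewrite !big_split /= -!mulr_sumr -mulr_suml q1 mul1r /dual_obj lerD2r lerD2l.
by rewrite ler_pM2l.
Qed.

Section strong_duality.
Context {R : realType} {n : nat} (p rho t : 'I_n -> R) (eps : R).
Hypotheses (p_gt0 : forall c, 0 < p c) (p_sum1 : \sum_(c < n) p c = 1).
Hypotheses (rho_ge0 : forall c, 0 <= rho c) (eps_ge0 : 0 <= eps).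
Hypothesis mean_rho_le : \sum_(c < n) p c * rho c <= eps.

Let tilt b c := - rho c + t c / b.
Let q_ b := gibbs p (tilt b).
Let kl_at b := shifted_kl p rho (q_ b).
Let alpha_ b := b * (ln (gibbs_norm p (tilt b)) - 1).
Let q_oo := gibbs p (fun c => - rho c).

Lemma dual_obj_gibbs b : 0 < b ->
  dual_obj p rho t eps (alpha_ b) b = b * ln (gibbs_norm p (tilt b)) + b * eps.
Proof.
move=> b0; have Z0 := gibbs_norm_gt0 p_gt0 p_sum1 (tilt b).
rewrite /dual_obj.
suff -> : \sum_(c < n) p c * expR ((t c - alpha_ b) / b - rho c - 1) = 1.
  by rewrite /alpha_; ring.
rewrite -[RHS](gibbs_sum1 p_gt0 p_sum1 (tilt b)); apply: eq_bigr => c _.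
have -> : (t c - alpha_ b) / b - rho c - 1 = tilt b c - ln (gibbs_norm p (tilt b)).
  by rewrite /alpha_ /tilt; field; rewrite gt_eqF.
by rewrite expRB lnK ?posrE // mulrA.
Qed.

Lemma dot_gibbs b : 0 < b ->
  \sum_(c < n) q_ b c * t c = b * (kl_at b + ln (gibbs_norm p (tilt b))).
Proof.
move=> b0; rewrite /kl_at shifted_kl_gibbs // subrK mulr_sumr.
by apply: eq_bigr => c _; rewrite /q_ /tilt; field; rewrite gt_eqF.
Qed.

Lemma dual_gap_gibbs b d : 0 < b -> kl_at b <= eps -> b * (eps - kl_at b) <= d ->
  dual_gap_within p rho t eps d.
Proof.
move=> b0 kl_le gap_le; exists (alpha_ b), b, (q_ b); split => //.
  by split => // [c|]; [exact/ltW/gibbs_gt0 | exact: gibbs_sum1].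
by rewrite dual_obj_gibbs // dot_gibbs //; lra.
Qed.

Lemma dual_gap_mixture b d : 0 < b -> 0 < d -> eps < kl_at b ->
  b * ln (\sum_(c < n) q_oo c * expR (t c / b)) - \sum_(c < n) q_oo c * t c <= d ->
  dual_gap_within p rho t eps d.
Proof.
move=> b0 d0 kl_gt cgf_le.
set f := shifted_kl p rho q_oo; set F := kl_at b in kl_gt *.
have f_le : f <= eps.
  by rewrite /f /q_oo shifted_kl_gibbsN //; apply: le_trans mean_rho_le; exact: oppr_ln_gibbs_normN_le.
set lam := (eps - f) / (F - f).
have eps_mix : eps = lam * F + (1 - lam) * f.
  by rewrite /lam; field; rewrite gt_eqF //; lra.
have lam01 : 0 <= lam <= 1.
  by apply/andP; split; [apply: divr_ge0 | rewrite ler_pdivrMr]; lra.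
have /andP[lam0 lam1] := lam01.
have qb0 c : 0 <= q_ b c by exact/ltW/gibbs_gt0.
have qoo0 c : 0 <= q_oo c by exact/ltW/gibbs_gt0.
exists (alpha_ b), b, (fun c => lam * q_ b c + (1 - lam) * q_oo c); split => //.
  split.
  - by move=> c; apply: addr_ge0; apply: mulr_ge0; rewrite ?subr_ge0 ?qb0 ?qoo0.
  - by rewrite big_split /= -!mulr_sumr !gibbs_sum1 // !mulr1 subrKC.
  - by rewrite (le_trans (convex_shifted_kl _ _ _ _ _ qb0 qoo0 lam01)) // eps_mix.
set Y := \sum_(c < n) q_oo c * expR (t c / b).
have lnZ : ln (gibbs_norm p (tilt b)) = - f + ln Y.
  rewrite /f /q_oo shifted_kl_gibbsN // opprK /tilt gibbs_normD // lnM ?posrE //.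
    exact: gibbs_norm_gt0.
  by apply: (@gibbs_norm_gt0 _ _ q_oo) => [c|]; [exact: gibbs_gt0 | exact: gibbs_sum1].
set B := \sum_(c < n) q_oo c * t c.
have dotE : \sum_(c < n) (lam * q_ b c + (1 - lam) * q_oo c) * t c =
            lam * (b * (F + ln (gibbs_norm p (tilt b)))) + (1 - lam) * B.
  rewrite (eq_bigr (fun c => lam * (q_ b c * t c) + (1 - lam) * (q_oo c * t c))); last by move=> c _; ring.
  by rewrite big_split /= -!mulr_sumr dot_gibbs.
rewrite dual_obj_gibbs // dotE lnZ.
(* the duality gap of the mixture is [(1 - lam)] times that of [q_oo] *)
have : (1 - lam) * (b * ln Y - B) <= (1 - lam) * d by rewrite ler_wpM2l ?subr_ge0.
rewrite eps_mix; nra.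
Qed.

Lemma continuous_kl_at b : 0 < b -> {for b, continuous kl_at}.
Proof.
move=> b0.
have numer_cont c : {for b, continuous (fun b => p c * expR (tilt b c))}.
  apply: continuousM; first exact: cvg_cst.
  apply: continuous_comp; last exact: continuous_expR.
  apply: continuousD; first exact: cvg_cst.
  apply: continuousM; first exact: cvg_cst.
  by apply: continuousV; [rewrite gt_eqF | exact: cvg_id].
have norm_cont : {for b, continuous (fun b => gibbs_norm p (tilt b))}.
  exact: continuous_sum_for.
have q_cont c : {for b, continuous (fun b => q_ b c)}.
  apply: continuousM; first exact: numer_cont.
  by apply: continuousV; [rewrite gt_eqF ?gibbs_norm_gt0 | exact: norm_cont].
have -> : kl_at = fun b => \sum_(c < n) q_ b c * (ln (q_ b c) + (- ln (p c) + rho c)).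
  by apply: funext => b'; apply: eq_bigr => c _; rewrite addrA.
apply: continuous_sum_for => c.
exact: (continuous_comp (q_cont c) (continuous_xlnxD _ _)).
Qed.

Lemma dual_gap_within_gt0 d : 0 < d -> dual_gap_within p rho t eps d.
Proof.
move=> d0.
have kl_at_ge0 b : 0 <= kl_at b.
  by apply: shifted_kl_ge0 => // [c|]; [exact/ltW/gibbs_gt0 | exact: gibbs_sum1].
set b1 := d / (eps + 1).
have b1_gt0 : 0 < b1 by rewrite divr_gt0 //; have := eps_ge0; lra.
have [kl1_le|kl1_gt] := leP (kl_at b1) eps.
  apply: (@dual_gap_gibbs b1 d b1_gt0 kl1_le).
  have : b1 * (eps + 1) = d by rewrite /b1; field; rewrite gt_eqF //; have := eps_ge0; lra.
  by have := kl_at_ge0 b1; have := eps_ge0; nra.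
set M := \sum_(c < n) `|t c|.
have tM c : `|t c| <= M by exact: ler_sum_elem.
have M2d : d * (2 * M ^+ 2 / d) = 2 * M ^+ 2 by field; rewrite gt_eqF.
(* large enough for [scaled_cgf_le] to bound the gap of the mixture by [d] *)
set b2 := b1 + 2 * M + 2 * M ^+ 2 / d.
have M0 : 0 <= M by apply: sumr_ge0 => c _; exact: normr_ge0.
have M2d0 : 0 <= 2 * M ^+ 2 / d by apply: divr_ge0; [nra | exact: ltW].
have b2_gt0 : 0 < b2 by rewrite /b2; lra.
have [kl2_le|kl2_gt] := leP (kl_at b2) eps; last first.
  apply: (@dual_gap_mixture b2 d b2_gt0 d0 kl2_gt).
  have qoo0 c : 0 <= q_oo c by exact/ltW/gibbs_gt0.
  have qoo1 : \sum_(c < n) q_oo c = 1 by exact: gibbs_sum1.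
  apply: le_trans (@scaled_cgf_le _ _ q_oo t M b2 qoo0 qoo1 tM b2_gt0 _) _.
    by rewrite /b2; lra.
  by rewrite ler_pdivrMr // /b2 !mulrDr; nra.
have [b b_in kl_eq] : exists2 b, b \in `[b1, b2] & kl_at b = eps.
  apply: IVT; first by rewrite /b2; lra.
    apply: continuous_in_subspaceT => b; rewrite inE /= in_itv /= => /andP[b1b _].
    by apply: continuous_kl_at; lra.
  by rewrite ge_min le_max; apply/andP; split; apply/orP; [right|left]; lra.
move: b_in; rewrite in_itv /= => /andP[b1b _].
by apply: (@dual_gap_gibbs b); rewrite ?kl_eq ?subrr ?mulr0 //; lra.
Qed.

End strong_duality.

Theorem lemmaB1 (R : realType) (C : nat) (phat rho : 'I_C -> R) (eps : R) :
  (forall c, 0 < phat c) -> \sum_(c < C) phat c = 1 ->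
  0 <= eps -> (forall c, 0 <= rho c) ->
  \sum_(c < C) phat c * rho c <= eps ->
  [/\ compact (Qset phat rho eps), convex_vset (Qset phat rho eps) &
      forall t : 'I_C -> R,
        support_fun (Qset phat rho eps) t =
        ereal_inf [set x : \bar R | exists (alpha beta : R), 0 < beta /\
                     x = (alpha + beta * eps + beta * \sum_(c < C)
                          phat c * expR ((t c - alpha) / beta - rho c - 1))%:E]].
Proof.
move=> p_gt0 p_sum1 eps_ge0 rho_ge0 mean_rho_le.
split; [exact: compact_Qset | exact: convex_Qset | move=> t].
apply/le_anti/andP; split.
- apply: ge_ereal_sup => _ [q /QsetP q_feas <-].
  apply: le_ereal_inf_tmp => _ [alpha [beta [beta_gt0 ->]]].
  by rewrite lee_fin; exact: weak_duality.
apply/lee_addgt0Pr => d d_gt0.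
have [alpha [beta [q [beta_gt0 q_feas dual_le]]]] :=
  dual_gap_within_gt0 phat rho t eps p_gt0 p_sum1 rho_ge0 eps_ge0 mean_rho_le d d_gt0.
apply: (@le_trans _ _ (dual_obj phat rho t eps alpha beta)%:E).
  by apply: ereal_inf_lbound; exists alpha, beta.
apply: (@le_trans _ _ ((\sum_(c < C) q c * t c)%:E + d%:E)); first by rewrite -EFinD lee_fin.
rewrite leeD2r // ereal_sup_ubound //; exists (\row_c q c); first exact: Qset_row.
by under eq_bigr do rewrite mxE.
Qed.
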